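(* Let $\eta_1,\eta_3\in[0,1]$ and $\eta_2\ge0$, and define $z^m:=\min\{\eta_2,1\}$ and $z^b:=\min\{\eta_1+\eta_2+\eta_3,1\}-z^m$. Then $$(\eta_1+\eta_3-\eta_1\eta_3)\,e^{-z^m}+1-e^{-z^m}\ \ge\ \frac{2}{e}\,z^b+\frac{3}{2e}\,z^m.$$ *)

From Stdlib Require Import Reals.
Open Scope R_scope.

(** With [E = e^-z] and [t = eta1 + eta3], the left side is at least
    [E (t - t^2/4) + 1 - E], since [eta1 eta3 <= t^2/4].  For [eta2 >= 1] the
    claim reduces to [e >= 5/2].  Otherwise [zb = min t (1 - z)], and the
    difference of the two sides is a concave function of [t] on [[0, 1 - z]]
    and nondecreasing beyond, so it suffices to check it at [t = 0] and
    [t = 1 - z].  Both endpoint inequalities are one-variable inequalities in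
    [z] in [[0,1]], proved by bounding [e^z] below by its Taylor polynomial of
    degree 4 and [e] below by [2.71825]. *)

From Stdlib Require Import Reals Lra Psatz Factorial.
Open Scope R_scope.

Lemma exp_partial_sum_le (x : R) (n : nat) : 0 <= x ->
  sum_f_R0 (fun i => / INR (fact i) * x ^ i) n <= exp x.
Proof.
  intro Hx; apply growing_ineq.
  - intro m; rewrite tech5.
    assert (0 <= / INR (fact (S m)) * x ^ S m).
    { apply Rmult_le_pos; [left; apply Rinv_0_lt_compat, INR_fact_lt_0 |].
      apply pow_le; exact Hx. }
    lra.
  - unfold exp; destruct (exist_exp x) as [l Hl]; exact Hl.
Qed.

Definition taylor4 (z : R) := 1 + z + z^2/2 + z^3/6 + z^4/24.

Lemma taylor4_le_exp (z : R) : 0 <= z -> taylor4 z <= exp z.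
Proof.
  intro Hz; generalize (exp_partial_sum_le z 4 Hz).
  unfold taylor4, fact; simpl; lra.
Qed.

Lemma inv_exp1_le : / exp 1 <= 0.36789.
Proof.
  assert (He : 2.71825 <= exp 1).
  { generalize (exp_partial_sum_le 1 7 ltac:(lra)); unfold fact; simpl; lra. }
  apply (Rmult_le_reg_l (exp 1)); [lra |].
  rewrite Rinv_r; lra.
Qed.

Lemma exp_neg_mul_le (z A B : R) : 0 <= z -> 0 <= B ->
  A <= taylor4 z * B -> exp (- z) * A <= B.
Proof.
  intros Hz HB HA.
  assert (HT : taylor4 z * B <= exp z * B)
    by (apply Rmult_le_compat_r; [| apply taylor4_le_exp]; lra).
  rewrite exp_Ropp; apply (Rmult_le_reg_l (exp z)); [apply exp_pos |].
  rewrite <- Rmult_assoc, Rinv_r by (apply Rgt_not_eq, exp_pos); lra.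
Qed.

Lemma taylor4_ge (z : R) : 0 <= z -> 1 + z <= taylor4 z.
Proof.
  intro Hz; unfold taylor4.
  assert (0 <= z^2) by (apply pow_le; lra).
  assert (0 <= z^3) by (apply pow_le; lra).
  assert (0 <= z^4) by (apply pow_le; lra).
  lra.
Qed.

Lemma one_sub_exp_neg_ge (z : R) : 0 <= z <= 1 ->
  3 / 2 * / exp 1 * z <= 1 - exp (- z).
Proof.
  intro Hz.
  assert (Hc := inv_exp1_le).
  assert (Hc0 : 0 < / exp 1) by (apply Rinv_0_lt_compat, exp_pos).
  assert (HP := taylor4_ge z ltac:(lra)).
  enough (exp (- z) * 1 <= 1 - 3 / 2 * / exp 1 * z) by lra.
  apply exp_neg_mul_le; [lra | nra |].
  enough (1 <= taylor4 z * (1 - 3 / 2 * 0.36789 * z)).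
  { assert (0 <= taylor4 z * ((0.36789 - / exp 1) * (3 / 2 * z)))
      by (apply Rmult_le_pos; [| apply Rmult_le_pos]; lra).
    lra. }
  unfold taylor4.
  assert (0 <= z^3) by (apply pow_le; lra).
  assert (0 <= z^4) by (apply pow_le; lra).
  assert (0 <= z^5) by (apply pow_le; lra).
  nra.
Qed.

Lemma exp_neg_mul_sq_le (z : R) : 0 <= z <= 1 ->
  exp (- z) * ((1 + z)^2 / 4) <= 1 - 2 * / exp 1 + z * / exp 1 / 2.
Proof.
  intro Hz.
  assert (Hc := inv_exp1_le).
  assert (Hc0 : 0 < / exp 1) by (apply Rinv_0_lt_compat, exp_pos).
  assert (HP := taylor4_ge z ltac:(lra)).
  apply exp_neg_mul_le; [lra | nra |].
  enough ((1 + z)^2 / 4 <= taylor4 z * (1 - 2 * 0.36789 + z * 0.36789 / 2)).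
  { assert (0 <= taylor4 z * ((0.36789 - / exp 1) * (2 - z / 2)))
      by (apply Rmult_le_pos; [| apply Rmult_le_pos]; lra).
    lra. }
  unfold taylor4.
  assert (0 <= z^3) by (apply pow_le; lra).
  assert (0 <= z^4) by (apply pow_le; lra).
  assert (0 <= z^5) by (apply pow_le; lra).
  assert (0 <= (z - 0.39)^2) by apply pow2_ge_0.
  lra.
Qed.

Lemma sub_mul_ge_quad (a b : R) : a + b - (a + b)^2 / 4 <= a + b - a * b.
Proof. assert (0 <= (a - b)^2) by apply pow2_ge_0; nra. Qed.

(** [f t = E (t - t^2/4) - k min(t, w) + p] is concave on [[0, w]] and
    nondecreasing on [[w, 2]]; its value at [t] lies above the chord
    [(1 - t/w) f 0 + (t/w) f w] by [E t (w - t) / 4]. *)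
Lemma quad_sub_min_ge (E k p w t : R) :
  0 <= E -> 0 < w <= 2 -> 0 <= t <= 2 -> 0 <= p ->
  0 <= E * (w - w^2/4) - k * w + p ->
  k * Rmin t w <= E * (t - t^2/4) + p.
Proof.
  intros HE Hw Ht Hp Hfw.
  destruct (Rle_lt_dec t w) as [Htw | Hwt].
  - rewrite Rmin_left by lra.
    apply (Rmult_le_reg_l w); [lra |].
    assert (w * (E * (t - t^2/4) + p - k * t)
            = E * t * (w - t) / 4 * w + (w - t) * p
              + t * (E * (w - w^2/4) - k * w + p)) by field.
    assert (0 <= E * t * (w - t) / 4 * w)
      by (repeat apply Rmult_le_pos; lra).
    assert (0 <= (w - t) * p) by (apply Rmult_le_pos; lra).
    assert (0 <= t * (E * (w - w^2/4) - k * w + p))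
      by (apply Rmult_le_pos; lra).
    lra.
  - rewrite Rmin_right by lra.
    assert (w - w^2/4 <= t - t^2/4) by nra.
    assert (E * (w - w^2/4) <= E * (t - t^2/4)) by (apply Rmult_le_compat_l; lra).
    lra.
Qed.

Theorem lemma3p3 (eta1 eta2 eta3 : R)
  (h1 : 0 <= eta1 <= 1) (h2 : 0 <= eta2) (h3 : 0 <= eta3 <= 1) :
  let zm := Rmin eta2 1 in
  let zb := Rmin (eta1 + eta2 + eta3) 1 - zm in
  (eta1 + eta3 - eta1 * eta3) * exp (- zm) + 1 - exp (- zm)
    >= 2 / exp 1 * zb + 3 / (2 * exp 1) * zm.
Proof.
  intros zm zb; unfold Rdiv; rewrite Rinv_mult.
  assert (Hc := inv_exp1_le).
  assert (Hprod : 0 <= eta1 * eta3 <= eta1) by nra.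
  destruct (Rle_lt_dec 1 eta2) as [Hbig | Hsmall].
  - assert (Hzm : zm = 1) by (apply Rmin_right; lra).
    assert (Hzb : zb = 0) by (unfold zb; rewrite Hzm, Rmin_right; lra).
    rewrite Hzb, Hzm, exp_Ropp.
    assert (0 <= (eta1 + eta3 - eta1 * eta3) * / exp 1)
      by (apply Rmult_le_pos; [| left; apply Rinv_0_lt_compat, exp_pos]; lra).
    lra.
  - assert (Hzm : zm = eta2) by (apply Rmin_left; lra).
    assert (Hzb : zb = Rmin (eta1 + eta3) (1 - eta2))
      by (unfold zb, Rmin; rewrite Hzm; do 2 destruct Rle_dec; lra).
    rewrite Hzb, Hzm.
    assert (HE : 0 < exp (- eta2)) by apply exp_pos.
    assert (Hp := one_sub_exp_neg_ge eta2 ltac:(lra)).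
    assert (Hw := exp_neg_mul_sq_le eta2 ltac:(lra)).
    assert (Hs := sub_mul_ge_quad eta1 eta3).
    assert (HEs : exp (- eta2) * (eta1 + eta3 - (eta1 + eta3)^2 / 4)
                  <= exp (- eta2) * (eta1 + eta3 - eta1 * eta3))
      by (apply Rmult_le_compat_l; lra).
    enough (2 * / exp 1 * Rmin (eta1 + eta3) (1 - eta2)
            <= exp (- eta2) * ((eta1 + eta3) - (eta1 + eta3)^2 / 4)
               + (1 - exp (- eta2) - 3 / 2 * / exp 1 * eta2)) by lra.
    apply quad_sub_min_ge; lra.
Qed.
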